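(* Let $\mathcal{A}=\{A_1,\dots,A_l\}$ be a finite family of real $n\times n$ matrices, each with a strictly dominant eigenvalue $\lambda_i$, and let $\tilde r_i,\tilde h_i$, $\tilde R$, $\tilde H$, $\mathcal{K}_{inner}(\mathcal{A})=\{\tilde Rp:p\ge0\}$ and $\mathcal{K}_{outer}(\mathcal{A})=\{r:\tilde Hr\ge0\}$ be as constructed below. Fix $\tau_i>0$ and $w_i>0$ for each $i$, and define $$\tilde A_i:=I+\tau_i(A_i-\lambda_iI),\qquad W_i:=\tilde A_i-w_i\,\tilde r_i\tilde h_i^T.$$ Let $R^{(k)}\in\mathbb{R}^{n\times m}$ be a matrix with no zero column such that every nonzero element of $\mathcal{K}_{inner}(\mathcal{A})$ lies in the interior of $\{R^{(k)}p:p\ge0\}$, and every nonzero element of $\{R^{(k)}p:p\ge0\}$ lies in the interior of $\mathcal{K}_{outer}(\mathcal{A})$. Let $R^{(k+1)}:=[R^{(k)},W_1R^{(k)},\dots,W_lR^{(k)}]\in\mathbb{R}^{n\times (l+1)m}$. Then for each $i$, with $\alpha_i:=1/\tau_i-\lambda_i$, there exists a matrix $P_i\in\mathbb{R}^{(l+1)m\times m}$ with all entries strictly positive such that $$(\alpha_iI+A_i)R^{(k)}=R^{(k+1)}P_i.$$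
   Context: Inequalities are entrywise. A real square matrix $A$ has a strictly dominant eigenvalue if it has a real, algebraically simple eigenvalue $\lambda$ with $\operatorname{Re}\mu<\lambda$ for every other eigenvalue $\mu$. Construction of $\tilde r_i,\tilde h_i$: for each $i$ let $\hat r_i,\hat h_i$ be nonzero right and left eigenvectors of $A_i$ for $\lambda_i$; set $\tilde h_1:=\hat h_1$; for each $k$ choose $\tilde r_k\in\{\hat r_k,-\hat r_k\}$ with $\langle\tilde h_1,\tilde r_k\rangle\ge0$; for $j>1$ choose $\tilde h_j\in\{\hat h_j,-\hat h_j\}$ with $\langle\tilde h_j,\tilde r_j\rangle\ge0$. $\tilde R$ is the $n\times l$ matrix with columns $\tilde r_k$, $\tilde H$ the $l\times n$ matrix with rows $\tilde h_j^T$. *)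

(* Real matrices are modelled as matrices with real entries
   (Num.real) over an arbitrary numeric algebraically closed field C (e.g. the
   complex numbers); this lets us speak about complex eigenvalues. *)
From HB Require Import structures.
From mathcomp Require Import all_boot all_order all_algebra.
Set Implicit Arguments. Unset Strict Implicit. Unset Printing Implicit Defensive.
Import Order.TTheory GRing.Theory Num.Theory.
Local Open Scope ring_scope.

Section Defs.
Variable C : numClosedFieldType.

Definition real_mx (p q : nat) (M : 'M[C]_(p, q)) : Prop :=
  forall i j, M i j \is Num.real.

Definition nonnegmx (p q : nat) (M : 'M[C]_(p, q)) : Prop :=
  forall i j, 0 <= M i j.

Definition strictly_dominant (n : nat) (A : 'M[C]_n) (lambda : C) : Prop :=
  [/\ lambda \is Num.real,
      root (char_poly A) lambda,
      mup lambda (char_poly A) = 1%N &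
      forall mu, root (char_poly A) mu -> mu != lambda -> 'Re mu < lambda].

Definition cone_gen (n m : nat) (M : 'M[C]_(n, m)) (x : 'cV[C]_n) : Prop :=
  exists p : 'cV[C]_m, nonnegmx p /\ x = M *m p.

Definition cone_outer (l n : nat) (H : 'M[C]_(l, n)) (x : 'cV[C]_n) : Prop :=
  real_mx x /\ nonnegmx (H *m x).

Definition interior_in (n : nat) (S : 'cV[C]_n -> Prop) (x : 'cV[C]_n) : Prop :=
  exists e : C, 0 < e /\
    forall y : 'cV[C]_n, real_mx y -> (forall i, `|y i 0 - x i 0| < e) -> S y.

Definition Rtilde (n l : nat) (rt : 'I_l -> 'cV[C]_n) : 'M[C]_(n, l) :=
  \matrix_(i < n, k < l) rt k i 0.
Definition Htilde (n l : nat) (ht : 'I_l -> 'rV[C]_n) : 'M[C]_(l, n) :=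
  \matrix_(j < l, i < n) ht j 0 i.

End Defs.

From HB Require Import structures.
From mathcomp Require Import all_boot all_order all_algebra.
From mathcomp Require Import ring.
Import Order.TTheory GRing.Theory Num.Theory.
Set Implicit Arguments. Unset Strict Implicit. Unset Printing Implicit Defensive.
Local Open Scope ring_scope.

(* Write t = tau_i, r = r~_i, h = h~_i and alpha = 1/t - lambda_i.  Since
       alpha I + A_i = t^-1 W_i + (w_i / t) r h^T,                         (1)
   it suffices to express r h^T R^(k) as R^(k+1) times a positive matrix.
   Two facts about the cones provide this:
   - every column of R^(k) is a nonzero point of cone(R^(k)), hence interior
     to the outer cone, so the row s := h^T R^(k) is strictly positive;
   - r is interior to cone(R^(k)), so for v := sum_j W_j R^(k) 1 there are
     d > 0 and a strictly positive q with R^(k) q = r - d v.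
   Hence r s = R^(k) (q s) + sum_j (W_j R^(k)) (d 1 s); adding the block
   t^-1 I in position j = i realises t^-1 W_i R^(k), and (1) concludes. *)

Section RealMatrices.
Variable C : numClosedFieldType.

Lemma real_mxD p q (M N : 'M[C]_(p, q)) :
  real_mx M -> real_mx N -> real_mx (M + N).
Proof. by move=> hM hN a b; rewrite mxE rpredD. Qed.

Lemma real_mxB p q (M N : 'M[C]_(p, q)) :
  real_mx M -> real_mx N -> real_mx (M - N).
Proof. by move=> hM hN a b; rewrite !mxE rpredB. Qed.

Lemma real_mxZ p q (c : C) (M : 'M[C]_(p, q)) :
  c \is Num.real -> real_mx M -> real_mx (c *: M).
Proof. by move=> hc hM a b; rewrite mxE rpredM. Qed.

Lemma real_mxM p q r (M : 'M[C]_(p, q)) (N : 'M[C]_(q, r)) :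
  real_mx M -> real_mx N -> real_mx (M *m N).
Proof. by move=> hM hN a b; rewrite mxE rpred_sum // => k _; rewrite rpredM. Qed.

Lemma real_mx_sum p q (I : finType) (F : I -> 'M[C]_(p, q)) :
  (forall j, real_mx (F j)) -> real_mx (\sum_j F j).
Proof. by move=> hF a b; rewrite summxE rpred_sum // => j _; apply: hF. Qed.

Lemma real_mx_scalar p (c : C) : c \is Num.real -> real_mx (c%:M : 'M[C]_p).
Proof. by move=> hc a b; rewrite mxE rpredMn. Qed.

Lemma real_mx_const p q : real_mx (const_mx 1 : 'M[C]_(p, q)).
Proof. by move=> a b; rewrite mxE. Qed.

Lemma real_deflated_step n (A : 'M[C]_n) (lam t w : C) (r : 'cV[C]_n) (h : 'rV[C]_n) :
  real_mx A -> lam \is Num.real -> t \is Num.real -> w \is Num.real ->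
  real_mx r -> real_mx h -> real_mx (1%:M + t *: (A - lam%:M) - w *: (r *m h)).
Proof.
move=> A_real lam_real t_real w_real r_real h_real.
apply: real_mxB; last by apply: real_mxZ => //; exact: real_mxM.
apply: real_mxD; first exact: real_mx_scalar.
by apply: real_mxZ => //; apply: real_mxB => //; exact: real_mx_scalar.
Qed.

End RealMatrices.

Section Cones.
Variable C : numClosedFieldType.

Lemma small_multiple k (e : C) (f : 'I_k -> C) :
  0 < e -> exists2 d, 0 < d & forall a, d * `|f a| < e.
Proof.
move=> e_gt0; pose S := \sum_a `|f a|.
have S1_gt0 : 0 < 1 + S by rewrite ltr_wpDr ?sumr_ge0.
exists (e / (1 + S)) => [|a]; first by rewrite divr_gt0.
have fa_le : `|f a| <= S by rewrite /S (bigD1 a) //= lerDl sumr_ge0.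
rewrite mulrAC ltr_pdivrMr // ltr_pM2l // (le_lt_trans fa_le) //.
by rewrite ltrDr ltr01.
Qed.

Lemma interior_shift n (S : 'cV[C]_n -> Prop) (x v : 'cV[C]_n) :
  real_mx x -> real_mx v -> interior_in S x -> exists2 d, 0 < d & S (x - d *: v).
Proof.
move=> x_real v_real [e [e_gt0 x_int]].
have [d d_gt0 d_small] := @small_multiple _ _ (fun a => v a 0) e_gt0.
exists d => //; apply: x_int => [|a].
  by apply: real_mxB => //; apply: real_mxZ => //; exact: gtr0_real.
by rewrite !mxE addrAC subrr add0r normrN normrM gtr0_norm.
Qed.

Lemma real_row_norm_gt0 n (h : 'rV[C]_n) :
  real_mx h -> h != 0 -> 0 < (h *m h^T) 0 0.
Proof.
move=> h_real h_nz.
have sq k : h 0 k * h^T k 0 = `|h 0 k| ^+ 2 by rewrite mxE -expr2 real_normK.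
have [k hk_nz] : exists k, h 0 k != 0.
  apply/existsP; apply: contraR h_nz; rewrite negb_exists => /forallP h0.
  by apply/eqP/matrixP => a b; rewrite ord1 mxE; apply/eqP; rewrite -[_ == _]negbK h0.
rewrite mxE (bigD1 k) //= sq ltr_wpDr ?exprn_gt0 ?normr_gt0 //.
by apply: sumr_ge0 => j _; rewrite sq exprn_ge0.
Qed.

(* In the interior of {x : H x >= 0}, every nonzero real row of H is strictly
   positive: step from x against that row and use nonnegativity there. *)
Lemma interior_outer_gt0 k n (H : 'M[C]_(k, n)) (x : 'cV[C]_n) j :
  real_mx H -> row j H != 0 -> real_mx x ->
  interior_in (cone_outer H) x -> 0 < (H *m x) j 0.
Proof.
move=> H_real h_nz x_real x_int; set h := row j H.
have h_real : real_mx h by move=> a b; rewrite mxE.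
have hT_real : real_mx h^T by move=> a b; rewrite !mxE; apply: H_real.
have entry (y : 'cV[C]_n) : (H *m y) j 0 = (h *m y) 0 0.
  by rewrite /h -row_mul [RHS]mxE.
have entryB (M N : 'M[C]_(k, 1)) (c : C) : (M - c *: N) j 0 = M j 0 - c * N j 0.
  by rewrite !mxE.
have [d d_gt0 [_ shifted_ge0]] := interior_shift x_real hT_real x_int.
have := shifted_ge0 j 0.
rewrite mulmxBr -scalemxAr entryB (entry h^T) subr_ge0.
apply: lt_le_trans; rewrite mulr_gt0 //; exact: real_row_norm_gt0.
Qed.

Lemma cone_gen_col n m (R : 'M[C]_(n, m)) b : cone_gen R (col b R).
Proof. by exists (delta_mx b 0); split; [move=> a c; rewrite mxE ler0n | exact: colE]. Qed.

Lemma functional_gt0_on_generators k n m (H : 'M[C]_(k, n)) (R : 'M[C]_(n, m)) j b :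
  real_mx H -> real_mx R -> row j H != 0 -> col b R != 0 ->
  (forall x, cone_gen R x -> x != 0 -> interior_in (cone_outer H) x) ->
  0 < (row j H *m R) 0 b.
Proof.
move=> H_real R_real h_nz Rb_nz R_int.
have -> : (row j H *m R) 0 b = (H *m col b R) j 0.
  by rewrite -row_mul colE mulmxA -colE !mxE.
apply: interior_outer_gt0 => //; first by move=> a c; rewrite mxE.
by apply: R_int Rb_nz; exact: cone_gen_col.
Qed.

Lemma interior_gen_pos n m (R : 'M[C]_(n, m)) (x v : 'cV[C]_n) :
  real_mx R -> real_mx x -> real_mx v -> interior_in (cone_gen R) x ->
  exists d, exists2 q : 'cV[C]_m,
    0 < d /\ (forall a, 0 < q a 0) & R *m q = x - d *: v.
Proof.
move=> R_real x_real v_real x_int.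
pose u : 'cV[C]_n := R *m const_mx 1.
have vu_real : real_mx (v + u).
  by apply: real_mxD => //; apply: real_mxM => //; exact: real_mx_const.
have [d d_gt0 [p [p_ge0 Rp]]] := interior_shift x_real vu_real x_int.
exists d, (p + d *: const_mx 1); first by split => // a; rewrite !mxE mulr1 ltr_wpDl.
by rewrite mulmxDr -Rp -scalemxAr scalerDr opprD addrA subrK.
Qed.

End Cones.

Section Refinement.
Variable C : numClosedFieldType.

Lemma shift_decomposition n (A : 'M[C]_n) (lam t w : C) (r : 'cV[C]_n) (h : 'rV[C]_n) :
  t != 0 ->
  (t^-1 - lam)%:M + A =
    t^-1 *: (1%:M + t *: (A - lam%:M) - w *: (r *m h)) + (w / t) *: (r *m h).
Proof. by move=> t_nz; apply/matrixP => a b; rewrite !mxE; field. Qed.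

(* The factor P_i: the block c q s against R, and the blocks (c d) 1 s, plus
   a I in position i, against the l matrices W_j R. *)
Definition refinement_factor l m (i : 'I_l) (q : 'cV[C]_m) (s : 'rV[C]_m) (c d a : C)
  : 'M[C]_(m + \sum_(j < l) m, m) :=
  col_mx (c *: (q *m s))
    (\mxcol_(j < l) ((c * d) *: (const_mx 1 *m s) + (if j == i then a else 0)%:M)).

Lemma refinement_factor_gt0 l m (i : 'I_l) (q : 'cV[C]_m) (s : 'rV[C]_m) (c d a : C) :
  0 < c -> 0 < d -> 0 <= a -> (forall b, 0 < q b 0) -> (forall b, 0 < s 0 b) ->
  forall x y, 0 < refinement_factor i q s c d a x y.
Proof.
move=> c_gt0 d_gt0 a_ge0 q_gt0 s_gt0 x y; rewrite -(splitK x).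
case: (split x) => x' /=; rewrite ?col_mxEu ?col_mxEd !mxE.
  by rewrite big_ord1 !mulr_gt0.
rewrite big_ord1 mxE mul1r ltr_wpDr ?mulr_gt0 //.
by rewrite mulrn_wge0 //; case: ifP.
Qed.

Lemma refinement_factor_mul l n m (i : 'I_l) (R : 'M[C]_(n, m)) (M : 'I_l -> 'M[C]_(n, m))
    (r : 'cV[C]_n) (q : 'cV[C]_m) (s : 'rV[C]_m) (c d a : C) :
  R *m q = r - d *: \sum_j M j *m const_mx 1 ->
  row_mx R (\mxrow_j M j) *m refinement_factor i q s c d a = c *: (r *m s) + a *: M i.
Proof.
move=> Rq; rewrite mul_row_col mul_mxrow_mxcol -scalemxAr mulmxA Rq.
rewrite (eq_bigr (fun j => (c * d) *: (M j *m const_mx 1 *m s) +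
                          (if j == i then a else 0) *: M j)); last first.
  by move=> j _; rewrite mulmxDr -scalemxAr mulmxA mul_mx_scalar.
rewrite big_split /= -scaler_sumr [X in _ + (_ + X)](bigD1 i) //= eqxx.
rewrite [X in _ + (_ + (_ + X))]big1 ?addr0; last by move=> j /negbTE ->; rewrite scale0r.
by rewrite mulmxBl -scalemxAl scalerBr scalerA mulmx_suml addrA subrK.
Qed.

Lemma col_Rtilde n l (rt : 'I_l -> 'cV[C]_n) k : col k (Rtilde rt) = rt k.
Proof. by apply/matrixP => a b; rewrite ord1 !mxE. Qed.

Lemma row_Htilde n l (ht : 'I_l -> 'rV[C]_n) j : row j (Htilde ht) = ht j.
Proof. by apply/matrixP => a b; rewrite ord1 !mxE. Qed.

Lemma real_Htilde n l (ht : 'I_l -> 'rV[C]_n) :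
  (forall j, real_mx (ht j)) -> real_mx (Htilde ht).
Proof. by move=> ht_real a b; rewrite mxE; apply: ht_real. Qed.

End Refinement.

Theorem mainTheorem6 (C : numClosedFieldType) (n l m : nat)
  (A : 'I_l -> 'M[C]_n) (lambda : 'I_l -> C)
  (rt : 'I_l -> 'cV[C]_n) (ht : 'I_l -> 'rV[C]_n)
  (tau w : 'I_l -> C) (Rk : 'M[C]_(n, m)) :
  (0 < l)%N ->
  (forall i, real_mx (A i)) ->
  (forall i, strictly_dominant (A i) (lambda i)) ->
  (forall i, real_mx (rt i) /\ rt i != 0 /\ A i *m rt i = lambda i *: rt i) ->
  (forall i, real_mx (ht i) /\ ht i != 0 /\ ht i *m A i = lambda i *: ht i) ->
  (forall (i0 k : 'I_l), nat_of_ord i0 = 0%N -> 0 <= (ht i0 *m rt k) 0 0) ->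
  (forall j : 'I_l, (0 < nat_of_ord j)%N -> 0 <= (ht j *m rt j) 0 0) ->
  (forall i, 0 < tau i) ->
  (forall i, 0 < w i) ->
  real_mx Rk ->
  (forall j, col j Rk != 0) ->
  (forall x, cone_gen (Rtilde rt) x -> x != 0 -> interior_in (cone_gen Rk) x) ->
  (forall x, cone_gen Rk x -> x != 0 -> interior_in (cone_outer (Htilde ht)) x) ->
  let W := fun i : 'I_l =>
    (1%:M + tau i *: (A i - (lambda i)%:M)) - w i *: (rt i *m ht i) in
  let Rnext := row_mx Rk (\mxrow_(i < l) (W i *m Rk)) in
  forall i : 'I_l,
    exists P : 'M[C]_(m + \sum_(j < l) m, m),
      (forall a b, 0 < P a b) /\
      ((tau i)^-1 - lambda i)%:M *m Rk + A i *m Rk = Rnext *m P.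
Proof.
move=> _ A_real dominant rt_eig ht_eig _ _ tau_gt0 w_gt0 Rk_real Rk_col
  inner_int outer_int W Rnext i.
have rt_real j : real_mx (rt j) by case: (rt_eig j).
have ht_real j : real_mx (ht j) by case: (ht_eig j).
have s_gt0 b : 0 < (ht i *m Rk) 0 b.
  rewrite -(row_Htilde ht i); apply: functional_gt0_on_generators => //.
    exact: real_Htilde.
  by rewrite row_Htilde; case: (ht_eig i) => _ [].
have rt_int : interior_in (cone_gen Rk) (rt i).
  by apply: inner_int (rt_eig i).2.1; rewrite -col_Rtilde; exact: cone_gen_col.
have v_real : real_mx (\sum_j W j *m Rk *m const_mx 1 : 'cV[C]_n).
  apply: real_mx_sum => j; apply: real_mxM; last exact: real_mx_const.
  have [lam_real _ _ _] := dominant j.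
  apply: real_mxM => //; apply: real_deflated_step => //; exact: gtr0_real.
have [d [q [d_gt0 q_gt0] Rq]] := interior_gen_pos Rk_real (rt_real i) v_real rt_int.
exists (refinement_factor i q (ht i *m Rk) (w i / tau i) d (tau i)^-1); split.
  by apply: refinement_factor_gt0; rewrite ?divr_gt0 ?invr_ge0 ?ltW.
rewrite /Rnext (refinement_factor_mul _ _ _ _ Rq) -mulmxDl.
rewrite (shift_decomposition _ _ (w i) (rt i) (ht i)) ?gt_eqF //.
by rewrite mulmxDl -!scalemxAl mulmxA addrC.
Qed.
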